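(* Let $d\ge1$ and $\lambda=(\lambda_1,\dots,\lambda_d)$ a vector of positive integers with $\sum_t\lambda_t=n\ge2$. For distinct $i,j\in\{0,1,\dots,n-2\}$, we have $i\preceq j$ in $P(\lambda)$ if and only if $i<j$ and $p(i)+p(j-i)=p(j)$.
   Context: $\Delta_\lambda=\mathrm{conv}(e_1,\dots,e_d,\lambda)\subset\mathbb{R}^d$, with fundamental parallelepiped $\Pi_\lambda=\{\sum_{i=1}^d\gamma_i(1,e_i)+\gamma_{d+1}(1,\lambda):0\le\gamma_i<1\}\subset\mathbb{R}^{d+1}$. The poset $P(\lambda)$ is the set $\Pi_\lambda\cap\mathbb{Z}^{d+1}$ ordered by $\sigma\preceq\mu$ iff $\mu-\sigma\in\Pi_\lambda\cap\mathbb{Z}^{d+1}$. For $0\le b<n-1$ set $p(b)=\left(\sum_{t=1}^d\lceil b\lambda_t/(n-1)\rceil-b,\ \lceil b\lambda_1/(n-1)\rceil,\dots,\lceil b\lambda_d/(n-1)\rceil\right)$; the map $b\mapsto p(b)$ is a bijection from $\{0,\dots,n-2\}$ onto $\Pi_\lambda\cap\mathbb{Z}^{d+1}$, and each integer $b$ is identified with $p(b)$, so $P(\lambda)$ is regarded as a partial order $\preceq$ on $\{0,\dots,n-2\}$. *)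

From HB Require Import structures.
From mathcomp Require Import all_boot all_order all_algebra.
From mathcomp Require Import reals.
Set Implicit Arguments. Unset Strict Implicit. Unset Printing Implicit Defensive.
Import Order.TTheory GRing.Theory Num.Theory.
Local Open Scope ring_scope.

Definition nlam (d : nat) (lam : 'I_d -> nat) : nat := (\sum_(t < d) lam t)%N.

Definition ceil_div (a m : nat) : nat := ((a + m.-1) %/ m)%N.

Definition cb (d : nat) (lam : 'I_d -> nat) (b : nat) (t : 'I_d) : nat :=
  ceil_div (b * lam t) (nlam lam).-1.

(* p(b) in Z^{d+1}; coordinate 0 is the first coordinate,
   coordinate lift ord0 t is the (t+1)-th one. *)
Definition pvec (d : nat) (lam : 'I_d -> nat) (b : nat) : 'rV[int]_(d.+1) :=
  \row_(k < d.+1)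
    match unlift ord0 k with
    | Some t => (cb lam b t)%:Z
    | None => (\sum_(t < d) (cb lam b t)%:Z) - b%:Z
    end.

(* x lies in the half-open fundamental parallelepiped
   Pi_lambda = { sum_i g_i (1,e_i) + g' (1,lambda) : 0 <= g_i, g' < 1 } in R^{d+1}. *)
Definition inPi (R : realType) (d : nat) (lam : 'I_d -> nat) (x : 'rV[int]_(d.+1)) : Prop :=
  exists (g : 'I_d -> R) (g' : R),
    (forall t, 0 <= g t < 1) /\ 0 <= g' < 1 /\
    (x ord0 ord0)%:~R = \sum_(t < d) g t + g' /\
    (forall t : 'I_d, (x ord0 (lift ord0 t))%:~R = g t + g' * (lam t)%:R).

(* The order of P(lambda) transported to {0,...,n-2} via b |-> p(b):
   sigma <= mu iff mu - sigma in Pi_lambda cap Z^{d+1}. *)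
Definition preceq (R : realType) (d : nat) (lam : 'I_d -> nat) (i j : nat) : Prop :=
  inPi R lam (pvec lam j - pvec lam i).

From HB Require Import structures.
From mathcomp Require Import all_boot all_order all_algebra.
From mathcomp Require Import reals.
From mathcomp Require Import zify ring lra.
Set Implicit Arguments. Unset Strict Implicit. Unset Printing Implicit Defensive.
Import Order.TTheory GRing.Theory Num.Theory.
Local Open Scope ring_scope.

(* Writing x = sum_t g_t (1, e_t) + g' (1, lambda), the coefficient g' is forced:
   the last d coordinates of x sum to (sum_t g_t) + n g' while the first one is
   (sum_t g_t) + g', so g' = excess x / (n - 1).  For x = p(j) - p(i) the excess is
   j - i, hence x lies in Pi_lambda iff 0 <= j - i < n - 1 and every
   g_t = c_t(j) - c_t(i) - (j - i) lambda_t / (n - 1) lies in [0, 1), i.e.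
   c_t(j) - c_t(i) = ceil((j - i) lambda_t / (n - 1)) = c_t(j - i).  These are
   exactly the coordinate identities of p(i) + p(j - i) = p(j), whose first
   coordinate is implied by the others since both sides have excess j. *)

Lemma ceil_div_bounds (a m : nat) : (0 < m)%N ->
  (a <= ceil_div a m * m < a + m)%N.
Proof.
move=> m_gt0; rewrite /ceil_div.
have := divn_eq (a + m.-1) m; have := ltn_pmod (a + m.-1) m_gt0.
lia.
Qed.

Lemma ceil_div_intP (a m : nat) (k : int) : (0 < m)%N ->
  reflect (a%:Z <= k * m%:Z < a%:Z + m%:Z) (k == (ceil_div a m)%:Z).
Proof.
move=> m_gt0; have /andP[c_lb c_ub] := ceil_div_bounds a m_gt0.
apply: (iffP eqP) => [->|/andP[k_lb k_ub]]; first by apply/andP; lia.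
nia.
Qed.

Lemma ceil_div_realP (R : realFieldType) (a m : nat) (k : int) : (0 < m)%N ->
  reflect (0 <= (k%:~R - a%:R / m%:R : R) < 1) (k == (ceil_div a m)%:Z).
Proof.
move=> m_gt0; have m_gt0R : (0 : R) < m%:R by rewrite ltr0n.
have -> : (0 <= (k%:~R - a%:R / m%:R : R) < 1) =
          (a%:R <= (k%:~R * m%:R : R) < a%:R + m%:R).
  have a_div_m : a%:R / m%:R * m%:R = a%:R :> R by rewrite divfK ?gt_eqF.
  rewrite subr_ge0 ltrBlDl ler_pdivrMr //.
  by apply/andP/andP => -[? ?]; split => //; nra.
rewrite -[a%:R]/((a%:Z)%:~R : R) -[m%:R]/((m%:Z)%:~R : R) -intrM -intrD.
by rewrite ler_int ltr_int; apply: ceil_div_intP.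
Qed.

Definition excess (V : zmodType) (n : nat) (x : 'rV[V]_n.+1) : V :=
  \sum_(t < n) x ord0 (lift ord0 t) - x ord0 ord0.

Lemma excessD (V : zmodType) (n : nat) (x y : 'rV[V]_n.+1) :
  excess (x + y) = excess x + excess y.
Proof.
rewrite /excess !mxE; under eq_bigr do rewrite !mxE.
by rewrite big_split /= opprD addrACA.
Qed.

Lemma excessB (V : zmodType) (n : nat) (x y : 'rV[V]_n.+1) :
  excess (x - y) = excess x - excess y.
Proof.
rewrite /excess !mxE; under eq_bigr do rewrite !mxE.
by rewrite sumrB !opprB addrACA [RHS]addrACA [- x ord0 ord0 + _]addrC.
Qed.

Lemma row_eq_excess (V : zmodType) (n : nat) (x y : 'rV[V]_n.+1) :
  (forall t, x ord0 (lift ord0 t) = y ord0 (lift ord0 t)) ->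
  excess x = excess y -> x = y.
Proof.
move=> tailE exE; apply/rowP => k.
case: (unliftP ord0 k) => [t ->|->]; first exact: tailE.
move: exE; rewrite /excess (eq_bigr _ (fun t _ => tailE t)).
by move/addrI/oppr_inj.
Qed.

Section Pvec.
Variables (d : nat) (lam : 'I_d -> nat).

Lemma pvec_head b : pvec lam b ord0 ord0 = \sum_(t < d) (cb lam b t)%:Z - b%:Z.
Proof. by rewrite mxE unlift_none. Qed.

Lemma pvec_tail b t : pvec lam b ord0 (lift ord0 t) = (cb lam b t)%:Z.
Proof. by rewrite mxE liftK. Qed.

Lemma excess_pvec b : excess (pvec lam b) = b%:Z.
Proof.
by rewrite /excess pvec_head (eq_bigr _ (fun t _ => pvec_tail b t)) opprB addrC subrK.
Qed.

Lemma pvec_addP i j : (i <= j)%N ->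
  pvec lam i + pvec lam (j - i) = pvec lam j <->
  forall t, (cb lam i t + cb lam (j - i) t)%N = cb lam j t.
Proof.
move=> le_ij; split => [pvecE t|cbE].
  move: (congr1 (fun x : 'rV[int]_d.+1 => x ord0 (lift ord0 t)) pvecE) => /=.
  by rewrite [LHS]mxE !pvec_tail -PoszD => -[].
apply: (@row_eq_excess _ _ (pvec lam i + pvec lam (j - i))) => [t|].
  by rewrite mxE !pvec_tail -cbE.
by rewrite excessD !excess_pvec -PoszD subnKC.
Qed.

End Pvec.

Section Parallelepiped.
Variables (R : realType) (d : nat) (lam : 'I_d -> nat).
Hypothesis n_gt1 : (1 < nlam lam)%N.
Local Notation N := (nlam lam).-1.

Lemma inPiP (x : 'rV[int]_d.+1) : inPi R lam x <->
  (0 <= excess x < N%:Z) /\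
  forall t,
    0 <= ((x ord0 (lift ord0 t))%:~R - (excess x)%:~R * (lam t)%:R / N%:R : R) < 1.
Proof.
have N_gt0 : (0 : R) < N%:R by rewrite ltr0n -ltnS prednK // ltnW.
have N_neq0 : N%:R != 0 :> R by rewrite gt_eqF.
have sum_lam : \sum_(t < d) (lam t)%:R = N%:R + 1 :> R.
  by rewrite -natr_sum natr1 prednK // ltnW.
split.
- case=> g [g' [g_range [g'_range [x_head x_tail]]]].
  have excess_g' : (excess x)%:~R = g' * N%:R.
    rewrite /excess intrB rmorph_sum /= x_head (eq_bigr _ (fun t _ => x_tail t)).
    by rewrite big_split /= -mulr_sumr sum_lam; ring.
  have /andP[g'_ge0 g'_lt1] := g'_range.
  split.
    apply/andP; split; first by rewrite -(ler0z R) excess_g' mulr_ge0.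
    by rewrite -(ltr_int R) excess_g' -[(N%:Z)%:~R]/(N%:R : R) gtr_pMl.
  move=> t; rewrite x_tail excess_g'.
  by rewrite (_ : g' * N%:R * _ / _ = g' * (lam t)%:R) ?addrK //; field.
- case=> /andP[excess_ge0 excess_ltN] tail_range.
  set e := excess x in excess_ge0 excess_ltN tail_range.
  exists (fun t => (x ord0 (lift ord0 t))%:~R - e%:~R * (lam t)%:R / N%:R).
  exists (e%:~R / N%:R).
  split; first exact: tail_range.
  split.
    have e_ge0 : (0 : R) <= e%:~R by rewrite ler0z.
    have e_ltN : e%:~R < N%:R :> R by rewrite -[N%:R]/((N%:Z)%:~R : R) ltr_int.
    by rewrite divr_ge0 ?ler0n // ltr_pdivrMr // mul1r.
  split; last by move=> t; field.
  have -> : (x ord0 ord0)%:~R = \sum_(t < d) (x ord0 (lift ord0 t))%:~R - e%:~R :> R.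
    by rewrite /e /excess intrB rmorph_sum opprB addrC subrK.
  by rewrite sumrB -mulr_suml -mulr_sumr sum_lam; field.
Qed.

Lemma preceq_leq i j : preceq R lam i j -> (i <= j)%N.
Proof.
by case/inPiP=> /andP[+ _] _; rewrite excessB !excess_pvec subr_ge0 lez_nat.
Qed.

Lemma preceqP i j : (i <= j)%N -> (j < N)%N ->
  preceq R lam i j <-> forall t, (cb lam i t + cb lam (j - i) t)%N = cb lam j t.
Proof.
move=> le_ij lt_jN; have N_gt0 : (0 < N)%N by apply: leq_ltn_trans lt_jN.
have tailB t : (pvec lam j - pvec lam i) ord0 (lift ord0 t) =
               (cb lam j t)%:Z - (cb lam i t)%:Z.
  by rewrite !mxE liftK.
have gapP t : reflect
    (0 <= (((cb lam j t)%:Z - (cb lam i t)%:Z)%:~R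
           - ((j - i)%N%:Z)%:~R * (lam t)%:R / N%:R : R) < 1)
    ((cb lam j t)%:Z - (cb lam i t)%:Z == (cb lam (j - i) t)%:Z).
  by rewrite -[((j - i)%N%:Z)%:~R]/((j - i)%:R : R) -natrM; apply: ceil_div_realP.
rewrite /preceq inPiP excessB !excess_pvec subzn //.
split=> [[_ tail_range] t | cbE].
  by move: (tail_range t); rewrite tailB => /gapP/eqP; lia.
split; first by apply/andP; lia.
by move=> t; rewrite tailB; apply/gapP/eqP; rewrite -cbE; lia.
Qed.

End Parallelepiped.

Theorem lemma2p13 (R : realType) (d : nat) (lam : 'I_d -> nat) :
  (1 <= d)%N ->
  (forall t, 0 < lam t)%N ->
  (2 <= nlam lam)%N ->
  forall i j : nat, (i < (nlam lam).-1)%N -> (j < (nlam lam).-1)%N -> i <> j ->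
    (preceq R lam i j <-> ((i < j)%N /\ pvec lam i + pvec lam (j - i) = pvec lam j)).
Proof.
move=> _ _ n_gt1 i j _ lt_jN neq_ij.
split=> [prec_ij | [lt_ij pvecE]].
  have le_ij := preceq_leq n_gt1 prec_ij.
  have lt_ij : (i < j)%N by rewrite ltn_neqAle le_ij andbT; apply/eqP.
  by split=> //; apply/(pvec_addP _ le_ij)/(preceqP R n_gt1 le_ij lt_jN).
by apply/(preceqP R n_gt1 (ltnW lt_ij) lt_jN)/(pvec_addP _ (ltnW lt_ij)).
Qed.
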